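(* There exist at least two inequivalent extremal Type~II $\mathbb{Z}_4$-codes of length $40$ whose residue codes have dimension $7$.
   Context: A $\mathbb{Z}_4$-code of length $n$ is a $\mathbb{Z}_4$-submodule of $\mathbb{Z}_4^n$; it is self-dual if it equals its dual with respect to $x\cdot y=\sum x_iy_i \pmod 4$. The Euclidean weight of $x$ is $n_1(x)+4n_2(x)+n_3(x)$, $n_\alpha(x)$ being the number of coordinates equal to $\alpha$. A Type~II $\mathbb{Z}_4$-code is a self-dual code all of whose codewords have Euclidean weight divisible by $8$; it is extremal if its minimum Euclidean weight equals $8\lfloor n/24\rfloor+8$ (so $16$ for $n=40$). The residue code is $C^{(1)}=\{c\bmod 2: c\in C\}$. Two $\mathbb{Z}_4$-codes are equivalent if one can be obtained from the other by permuting coordinates and changing the signs of some coordinates. *)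

From HB Require Import structures.
From mathcomp Require Import all_boot all_order all_fingroup all_algebra.
Set Implicit Arguments. Unset Strict Implicit. Unset Printing Implicit Defensive.
Import GRing.Theory.
Local Open Scope ring_scope.

Section Z4Codes.
Variable n : nat.
Notation vec := 'rV['Z_4]_n.

Definition is_Z4code (C : {set vec}) : Prop :=
  [/\ 0 \in C,
      (forall x y, x \in C -> y \in C -> x + y \in C) &
      (forall (a : 'Z_4) x, x \in C -> a *: x \in C)].

Definition z4dot (x y : vec) : 'Z_4 := \sum_(i < n) x ord0 i * y ord0 i.

Definition z4dual (C : {set vec}) : {set vec} :=
  [set y | [forall x in C, z4dot x y == 0]].

Definition self_dual (C : {set vec}) : Prop := is_Z4code C /\ C = z4dual C.

Definition ew_coord (a : 'Z_4) : nat :=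
  match val a with 0 => 0 | 1 => 1 | 2 => 4 | _ => 1 end%N.

Definition euclid_wt (x : vec) : nat := (\sum_(i < n) ew_coord (x ord0 i))%N.

Definition typeII (C : {set vec}) : Prop :=
  self_dual C /\ (forall x, x \in C -> 8 %| euclid_wt x)%N.

Definition min_euclid_wt (C : {set vec}) (d : nat) : Prop :=
  (exists2 x, x \in C & x != 0%R /\ euclid_wt x = d) /\
  (forall x, x \in C -> x != 0%R -> d <= euclid_wt x)%N.

Definition extremal_typeII (C : {set vec}) : Prop :=
  typeII C /\ min_euclid_wt C (8 * (n %/ 24) + 8)%N.

Definition red2 (a : 'Z_4) : 'F_2 := ((val a) %% 2)%:R.

Definition residue (C : {set vec}) : {set 'rV['F_2]_n} :=
  [set map_mx red2 c | c : vec in C].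

Definition residue_dim (C : {set vec}) : nat := \dim <<enum (residue C)>>%VS.

Definition z4equiv (C D : {set vec}) : Prop :=
  exists (s : 'S_n) (e : 'I_n -> bool),
    D = [set \row_i ((-1) ^+ e i * c ord0 (s i)) | c : vec in C].

End Z4Codes.

From mathcomp Require Import all_boot all_order all_fingroup all_algebra zify.
Set Implicit Arguments. Unset Strict Implicit. Unset Printing Implicit Defensive.
Import GRing.Theory.
Local Open Scope ring_scope.

(* Both codes are given in standard form: R is a list of ninf rows whose first
   ninf columns form the identity, T a list of npar rows whose last npar
   columns form the identity, and the code is the dual of the rows of R
   together with the doubled rows of T.  Once these generators are checked to
   be mutually orthogonal, every codeword decomposes as
   sum_i x_i R_i + sum_j c_j T_j with 2 c_j = 0.  Consequently the code is
   self-dual; its residue code is spanned by the ninf independent rows of R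
   mod 2; doubly-evenness follows from the generators, the Euclidean weight
   being congruent mod 8 to a quadratic form; and the set of odd coordinates
   of a codeword is determined by its ninf information bits.  The minimum
   weight and the inequivalence invariant (two words with 16 odd coordinates
   meeting in exactly 6, which monomial maps preserve) thus reduce to finite
   checks over the 2^7 residue words, evaluated by vm_compute on the explicit
   matrices at the end of the file. *)

Lemma val_addZ4 (a b : 'Z_4) : val (a + b) = ((val a + val b) %% 4)%N.
Proof. by []. Qed.

Lemma val_inZp4 m : val (inZp m : 'Z_4) = (m %% 4)%N.
Proof. by []. Qed.

Lemma modn_sum I (r : seq I) (P : pred I) (F : I -> nat) d :
  ((\sum_(i <- r | P i) (F i %% d)) %% d = (\sum_(i <- r | P i) F i) %% d)%N.
Proof.
elim/big_rec2: _ => [//|i x y _ IH].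
by rewrite -modnDm IH modnDm modnDml.
Qed.

Lemma val_sumZ4 I (r : seq I) (P : pred I) (F : I -> 'Z_4) :
  val (\sum_(i <- r | P i) F i) = ((\sum_(i <- r | P i) val (F i)) %% 4)%N.
Proof.
elim/big_rec2: _ => [//|i x y _ IH].
by rewrite val_addZ4 IH modnDmr.
Qed.

Lemma mul_2torsion (a b : 'Z_4) : a *+ 2 = 0 -> b *+ 2 = 0 -> a * b = 0.
Proof.
have : (a *+ 2 == 0) ==> (b *+ 2 == 0) ==> (a * b == 0).
  by move: a b => [[|[|[|[|?]]]] ?] [[|[|[|[|?]]]] ?].
by move=> H /eqP Ha /eqP Hb; move: H; rewrite Ha Hb => /eqP.
Qed.

Lemma two_torsion_even (a : 'Z_4) : (a *+ 2 == 0) = ~~ odd (val a).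
Proof. by move: a => [[|[|[|[|?]]]] ?]. Qed.

Lemma even_coord (a : 'Z_4) : ~~ odd (val a) -> a = (a != 0)%:R *+ 2.
Proof. by move: a => [[|[|[|[|?]]]] ?] //= _; apply: val_inj. Qed.

(* Finite sums over ordinals evaluate as list sums, which vm_compute can run. *)
Lemma sum_iota n (f : nat -> nat) :
  (\sum_(k < n) f k = sumn [seq f k | k <- iota 0 n])%N.
Proof. by rewrite sumnE big_map -(big_mkord xpredT f) /index_iota subn0. Qed.

Lemma card_ord_count n (P : pred nat) : #|[set k : 'I_n | P k]| = count P (iota 0 n).
Proof.
rewrite -sumn_count -sum_iota -sum1_card big_mkcond /=.
by apply: eq_bigr => k _; rewrite inE; case: (P k).
Qed.

Section Z4Vectors.
Variable n : nat.
Notation vec := 'rV['Z_4]_n.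

Lemma z4dotC (x y : vec) : z4dot x y = z4dot y x.
Proof. by apply: eq_bigr => i _; rewrite mulrC. Qed.

Lemma z4dotDr (x y z : vec) : z4dot x (y + z) = z4dot x y + z4dot x z.
Proof. by rewrite /z4dot -big_split; apply: eq_bigr => i _; rewrite mxE mulrDr. Qed.

Lemma z4dotZr (x y : vec) a : z4dot x (a *: y) = a * z4dot x y.
Proof. by rewrite /z4dot mulr_sumr; apply: eq_bigr => i _; rewrite mxE mulrCA. Qed.

Lemma z4dot0r (x : vec) : z4dot x 0 = 0.
Proof. by rewrite -(scale0r 0) z4dotZr mul0r. Qed.

Lemma z4dot_sumr (x : vec) I (r : seq I) (P : pred I) (F : I -> vec) :
  z4dot x (\sum_(i <- r | P i) F i) = \sum_(i <- r | P i) z4dot x (F i).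
Proof. by apply: (big_morph _ (z4dotDr x) (z4dot0r x)). Qed.

Lemma z4dotZl (x y : vec) a : z4dot (a *: x) y = a * z4dot x y.
Proof. by rewrite z4dotC z4dotZr z4dotC. Qed.

Lemma z4dualP (S : {set vec}) x :
  reflect (forall y, y \in S -> z4dot y x = 0) (x \in z4dual S).
Proof. by rewrite inE; apply: (iffP forall_inP) => H y /H /eqP. Qed.

Lemma z4dual_code (S : {set vec}) : is_Z4code (z4dual S).
Proof.
split; first by apply/z4dualP => y _; rewrite z4dot0r.
  by move=> x y /z4dualP Hx /z4dualP Hy; apply/z4dualP => z Hz; rewrite z4dotDr Hx ?Hy ?addr0.
by move=> a x /z4dualP Hx; apply/z4dualP => z Hz; rewrite z4dotZr Hx ?mulr0.
Qed.

Lemma z4dualS (S T : {set vec}) : S \subset T -> z4dual T \subset z4dual S.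
Proof. by move=> /subsetP sST; apply/subsetP => x /z4dualP Hx; apply/z4dualP => y /sST /Hx. Qed.

Lemma self_dual_of_generators (S : {set vec}) :
  S \subset z4dual S ->
  {in z4dual S &, forall x y, z4dot x y = 0} -> self_dual (z4dual S).
Proof.
move=> sSC orthC; split; first exact: z4dual_code.
apply/eqP; rewrite eqEsubset (z4dualS sSC) andbT.
by apply/subsetP => x Hx; apply/z4dualP => y Hy; rewrite orthC.
Qed.

(* Euclidean weight modulo 8 is the sum of the squared representatives; this
   quadratic form is compatible with the inner product. *)
Definition sqnorm (x : vec) : nat := (\sum_(k < n) val (x ord0 k) ^ 2)%N.

Lemma euclid_wt_sqnorm x : (euclid_wt x = sqnorm x %[mod 8])%N.
Proof.
rewrite /euclid_wt /sqnorm -modn_sum -[RHS]modn_sum; congr (_ %% 8)%N.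
by apply: eq_bigr => k _; move: (x ord0 k) => [[|[|[|[|?]]]] ?].
Qed.

Lemma val_z4dot (x y : vec) :
  val (z4dot x y) = ((\sum_(k < n) val (x ord0 k) * val (y ord0 k)) %% 4)%N.
Proof. by rewrite /z4dot val_sumZ4 -[RHS]modn_sum. Qed.

Lemma sqnormD x y :
  (sqnorm (x + y) = sqnorm x + sqnorm y + 2 * val (z4dot x y) %[mod 8])%N.
Proof.
have sq_add (a b : 'Z_4) :
    (val (a + b)%R ^ 2 = val a ^ 2 + val b ^ 2 + 2 * (val a * val b) %[mod 8])%N.
  by move: a b => [[|[|[|[|?]]]] ?] [[|[|[|[|?]]]] ?].
rewrite /sqnorm -modn_sum.
under eq_bigr do rewrite mxE sq_add.
rewrite modn_sum big_split [in LHS]big_split -big_distrr.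
by rewrite val_z4dot muln_modr // (_ : (2 * 4 = 8)%N) // modnDmr.
Qed.

Lemma sqnormZ a x : (sqnorm (a *: x) = val a ^ 2 * sqnorm x %[mod 8])%N.
Proof.
have sq_mul (b c : 'Z_4) : (val (b * c)%R ^ 2 = val b ^ 2 * val c ^ 2 %[mod 8])%N.
  by move: b c => [[|[|[|[|?]]]] ?] [[|[|[|[|?]]]] ?].
rewrite /sqnorm -modn_sum.
under eq_bigr do rewrite mxE sq_mul.
by rewrite modn_sum big_distrr.
Qed.

Lemma torsion_sqnorm (c : 'Z_4) (v : vec) :
  c *+ 2 = 0 -> ~~ odd (sqnorm v) -> (sqnorm (c *: v) %% 8 = 0)%N.
Proof.
rewrite sqnormZ; move: c => [[|[|[|[|?]]]] ?] //=.
by move=> _; rewrite -dvdn2 => /dvdnP [m ->]; lia.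
Qed.

(* Coordinates with odd representative: an invariant of sign changes. *)
Definition odd_supp (x : vec) : {set 'I_n} := [set k | odd (val (x ord0 k))].

(* Odd coordinates have Euclidean weight 1 and even nonzero ones weight 4. *)
Lemma odd_supp_le_euclid_wt x : (#|odd_supp x| <= euclid_wt x)%N.
Proof.
rewrite -sum1_card big_mkcond /=; apply: leq_sum => k _.
by rewrite inE; move: (x ord0 k) => [[|[|[|[|?]]]] ?].
Qed.

Lemma euclid_wt_even x : odd_supp x = set0 ->
  euclid_wt x = (4 * #|[set k | x ord0 k != 0%R]|)%N.
Proof.
move=> Hev; rewrite -sum1_card big_mkcond big_distrr; apply: eq_bigr => k _ /=.
have : k \notin odd_supp x by rewrite Hev inE.
by rewrite !inE; move: (x ord0 k) => [[|[|[|[|?]]]] ?].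
Qed.

Definition has_odd_pair (C : {set vec}) (a b m : nat) : Prop :=
  exists x y, [/\ x \in C, y \in C, #|odd_supp x| = a, #|odd_supp y| = b
                & #|odd_supp x :&: odd_supp y| = m].

Lemma odd_supp_monomial (s : 'S_n) (e : 'I_n -> bool) (c : vec) :
  odd_supp (\row_i ((-1) ^+ e i * c ord0 (s i))) = s @^-1: odd_supp c.
Proof.
apply/setP => k; rewrite !inE mxE.
by case: (e k); move: (c ord0 (s k)) => [[|[|[|[|?]]]] ?].
Qed.

Lemma has_odd_pair_equiv (C D : {set vec}) a b m :
  z4equiv C D -> has_odd_pair D a b m -> has_odd_pair C a b m.
Proof.
move=> [s [e ->]] [_ [_ [/imsetP [x Hx ->] /imsetP [y Hy ->] Ha Hb Hm]]].
rewrite !odd_supp_monomial -preimsetI !(card_preimset _ (@perm_inj _ s)) in Ha Hb Hm.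
by exists x, y.
Qed.

End Z4Vectors.

Fixpoint allbits (m : nat) (P : seq nat -> bool) : bool :=
  if m is m'.+1 then allbits m' (fun l => P (0%N :: l)) && allbits m' (fun l => P (1%N :: l))
  else P [::].

Lemma allbitsP m P l : allbits m P -> size l = m -> all (fun v => v <= 1)%N l -> P l.
Proof.
elim: m P l => [|m IH] P [|[|[|//]] l] //= /andP [H0 H1] [Hs] Hl.
  exact: (IH (fun l => P (0%N :: l))).
exact: (IH (fun l => P (1%N :: l))).
Qed.

Lemma all_iotaP m (P : pred nat) : all P (iota 0 m) -> forall i : 'I_m, P i.
Proof. by move=> /allP H i; apply: H; rewrite mem_iota ltn_ord. Qed.

Definition vecZ4 n (w : seq nat) : 'rV['Z_4]_n := \row_(k < n) inZp (nth 0%N w k).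

Definition natdot n (u v : seq nat) : nat :=
  sumn [seq (nth 0 u k %% 4) * (nth 0 v k %% 4) | k <- iota 0 n]%N.

Definition natsq n (w : seq nat) : nat := sumn [seq (nth 0 w k %% 4) ^ 2 | k <- iota 0 n]%N.

Lemma val_z4dot_vecZ4 n u v :
  val (z4dot (vecZ4 n u) (vecZ4 n v)) = (natdot n u v %% 4)%N.
Proof.
rewrite val_z4dot; under eq_bigr do rewrite !mxE !val_inZp4.
by rewrite (sum_iota n (fun k => (nth 0 u k %% 4) * (nth 0 v k %% 4))%N).
Qed.

Lemma sqnorm_vecZ4 n w : sqnorm (vecZ4 n w) = natsq n w.
Proof.
rewrite /sqnorm; under eq_bigr do rewrite !mxE !val_inZp4.
exact: (sum_iota n (fun k => (nth 0 w k %% 4) ^ 2)%N).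
Qed.

Lemma euclid_wt_vecZ4 n w :
  euclid_wt (vecZ4 n w) = sumn [seq ew_coord (inZp (nth 0 w k)) | k <- iota 0 n].
Proof.
rewrite /euclid_wt; under eq_bigr do rewrite mxE.
exact: (sum_iota n (fun k => ew_coord (inZp (nth 0 w k)))).
Qed.

Lemma odd_supp_vecZ4 n w : odd_supp (vecZ4 n w) = [set k : 'I_n | odd (nth 0 w k)].
Proof. by apply/setP => k; rewrite !inE mxE val_inZp4 odd_mod. Qed.

Lemma has_odd_pair_vecZ4 n (C : {set 'rV['Z_4]_n}) u v a b m :
  vecZ4 n u \in C -> vecZ4 n v \in C ->
  count (fun k => odd (nth 0 u k)) (iota 0 n) = a ->
  count (fun k => odd (nth 0 v k)) (iota 0 n) = b ->
  count (fun k => odd (nth 0 u k) && odd (nth 0 v k)) (iota 0 n) = m ->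
  has_odd_pair C a b m.
Proof.
move=> Hu Hv <- <- <-; exists (vecZ4 n u), (vecZ4 n v).
rewrite !odd_supp_vecZ4 -!card_ord_count; split=> //.
by apply: eq_card => k; rewrite !inE.
Qed.

Lemma red2D (a b : 'Z_4) : red2 (a + b) = red2 a + red2 b.
Proof. by move: a b => [[|[|[|[|?]]]] ?] [[|[|[|[|?]]]] ?]; apply: val_inj. Qed.

Lemma red2M (a b : 'Z_4) : red2 (a * b) = red2 a * red2 b.
Proof. by move: a b => [[|[|[|[|?]]]] ?] [[|[|[|[|?]]]] ?]; apply: val_inj. Qed.

Lemma red20 : red2 0 = 0.
Proof. exact: val_inj. Qed.

Lemma red2_odd (a : 'Z_4) : red2 a = (odd (val a))%:R.
Proof. by move: a => [[|[|[|[|?]]]] ?]; apply: val_inj. Qed.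

Lemma F2_natr m : (m%:R : 'F_2) = (odd m)%:R.
Proof. by rewrite -(Fp_nat_mod (isT : prime 2)) modn2. Qed.

Lemma F2_bool_inj (b c : bool) : (b%:R : 'F_2) = c%:R -> b = c.
Proof. by case: b c => [] [] // /(congr1 val). Qed.

Lemma sum_kron (V : pzRingType) m (F : 'I_m -> V) i0 :
  \sum_(i < m) F i * (i == i0)%:R = F i0.
Proof.
rewrite (bigD1 i0) //= eqxx mulr1 big1 ?addr0 // => i /negPf->.
by rewrite mulr0.
Qed.

Lemma row_split_eq0 (V : zmodType) m1 m2 (z : 'rV[V]_(m1 + m2)) :
  (forall i : 'I_m1, z ord0 (lshift m2 i) = 0) ->
  (forall j : 'I_m2, z ord0 (rshift m1 j) = 0) -> z = 0.
Proof.
move=> Hl Hr; apply/rowP => k; rewrite mxE -(splitK k).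
by case: (split k) => [i|j] /=; [apply: Hl | apply: Hr].
Qed.

Section StandardForm.

Variables (ninf npar : nat) (R T : seq (seq nat)).
Local Notation n := (ninf + npar).
Local Notation vec := 'rV['Z_4]_(ninf + npar).

Definition entry (M : seq (seq nat)) (i k : nat) : nat := nth 0 (nth [::] M i) k.

Definition rowR (i : 'I_ninf) : vec := vecZ4 n (nth [::] R i).
Definition rowT (j : 'I_npar) : vec := vecZ4 n (nth [::] T j).

Definition std_generators : {set vec} :=
  [set rowR i | i : 'I_ninf] :|: [set 2%:R *: rowT j | j : 'I_npar].

Definition std_code : {set vec} := z4dual std_generators.

Definition std_form : bool :=
  all (fun i => all (fun k => entry R i k == (i == k) :> nat) (iota 0 ninf)) (iota 0 ninf) &&
  all (fun j => all (fun l => entry T j (ninf + l) == (j == l) :> nat) (iota 0 npar)) (iota 0 npar).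

Definition code_test (w : seq nat) : bool :=
  all (fun i => natdot n (nth [::] R i) w %% 4 == 0)%N (iota 0 ninf) &&
  all (fun j => ~~ odd (natdot n (nth [::] T j) w)) (iota 0 npar).

(* The rows of R lie in the code: this makes all generators orthogonal. *)
Definition generators_test : bool := all (fun i => code_test (nth [::] R i)) (iota 0 ninf).

Lemma std_codeP x :
  reflect ((forall i, z4dot (rowR i) x = 0) /\ (forall j, z4dot (rowT j) x *+ 2 = 0))
          (x \in std_code).
Proof.
apply: (iffP (z4dualP _ _)) => [H | [HR HT] y].
  split=> [i|j]; first by apply: H; apply/setUP; left; apply/imsetP; exists i.
  by rewrite -mulr_natl -z4dotZl; apply: H; apply/setUP; right; apply/imsetP; exists j.
by case/setUP => /imsetP [i _ ->]; rewrite ?z4dotZl ?mulr_natl.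
Qed.

Lemma code_testP w : code_test w -> vecZ4 n w \in std_code.
Proof.
case/andP => /all_iotaP HR /all_iotaP HT; apply/std_codeP; split=> [i|j].
  by apply: val_inj; rewrite val_z4dot_vecZ4; apply/eqP/HR.
by apply/eqP; rewrite two_torsion_even val_z4dot_vecZ4 odd_mod ?HT.
Qed.

Lemma std_code_is_code : is_Z4code std_code.
Proof. exact: z4dual_code. Qed.

Lemma std_code_sum I (r : seq I) (P : pred I) (F : I -> vec) :
  (forall i, P i -> F i \in std_code) -> \sum_(i <- r | P i) F i \in std_code.
Proof.
have [C0 CD _] := std_code_is_code.
by move=> HF; apply: (big_ind (fun x => x \in std_code)).
Qed.

Lemma std_code_sub x y : x \in std_code -> y \in std_code -> x - y \in std_code.
Proof.
have [_ CD CZ] := std_code_is_code.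
by move=> Hx Hy; apply: CD => //; rewrite -scaleN1r; apply: CZ.
Qed.

Hypothesis std : std_form.
Hypothesis gens : generators_test.

Lemma rowR_info (i i' : 'I_ninf) : rowR i ord0 (lshift npar i') = (i == i')%:R.
Proof.
case/andP: std => /all_iotaP /(_ i) /all_iotaP /(_ i') /eqP E _.
rewrite mxE; change ((inZp (entry R i i') : 'Z_4) = (nat_of_ord i == i')%:R); rewrite E.
by case: (_ == _); apply: val_inj.
Qed.

Lemma rowT_par (j j' : 'I_npar) : rowT j ord0 (rshift ninf j') = (j == j')%:R.
Proof.
case/andP: std => _ /all_iotaP /(_ j) /all_iotaP /(_ j') /eqP E.
rewrite mxE; change ((inZp (entry T j (ninf + j')) : 'Z_4) = (nat_of_ord j == j')%:R); rewrite E.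
by case: (_ == _); apply: val_inj.
Qed.

Lemma rowR_in_code i : rowR i \in std_code.
Proof. exact: code_testP (all_iotaP gens i). Qed.

Lemma torsion_rowT_in_code c j : c *+ 2 = 0 -> c *: rowT j \in std_code.
Proof.
move=> Hc; apply/std_codeP; split=> [i|j'].
  rewrite z4dotZr; apply: mul_2torsion => //.
  by rewrite z4dotC; case/std_codeP: (rowR_in_code i) => _ ->.
by rewrite z4dotZr -mulrnAl Hc mul0r.
Qed.

Lemma generators_in_code : std_generators \subset std_code.
Proof.
apply/subsetP => y /setUP [] /imsetP [i _ ->]; first exact: rowR_in_code.
by apply: torsion_rowT_in_code; apply: val_inj.
Qed.

Lemma z4dot_on_par (v y : vec) : (forall i : 'I_ninf, y ord0 (lshift npar i) = 0) ->
  z4dot v y = \sum_(j < npar) v ord0 (rshift ninf j) * y ord0 (rshift ninf j).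
Proof.
move=> Hy; rewrite /z4dot big_split_ord /= big1 ?add0r // => i _.
by rewrite Hy mulr0.
Qed.

Lemma z4dot_on_info (v y : vec) : (forall j : 'I_npar, y ord0 (rshift ninf j) = 0) ->
  z4dot v y = \sum_(i < ninf) v ord0 (lshift npar i) * y ord0 (lshift npar i).
Proof.
move=> Hy; rewrite /z4dot big_split_ord /= [X in _ + X]big1 ?addr0 // => j _.
by rewrite Hy mulr0.
Qed.

Definition info_part (x : vec) : vec :=
  \sum_(i < ninf) x ord0 (lshift npar i) *: rowR i.

Definition par_coef (x : vec) (j : 'I_npar) : 'Z_4 :=
  (x - info_part x) ord0 (rshift ninf j).

Lemma info_part_in_code x : info_part x \in std_code.
Proof.
have [_ _ CZ] := std_code_is_code.
by apply: std_code_sum => i _; apply: CZ; apply: rowR_in_code.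
Qed.

Lemma info_part_info x (i : 'I_ninf) : (x - info_part x) ord0 (lshift npar i) = 0.
Proof.
rewrite !mxE summxE.
under eq_bigr do rewrite mxE rowR_info.
by rewrite sum_kron subrr.
Qed.

(* Parity coefficients of a codeword are killed by 2, as 2 T_j is a generator. *)
Lemma par_coef_torsion x (j : 'I_npar) : x \in std_code -> par_coef x j *+ 2 = 0.
Proof.
move=> Hx; have /std_codeP [_ /(_ j)] := std_code_sub Hx (info_part_in_code x).
rewrite (z4dot_on_par _ (info_part_info x)).
under eq_bigr do rewrite rowT_par mulrC eq_sym.
by rewrite sum_kron.
Qed.

Lemma std_decomp x : x \in std_code ->
  x = info_part x + \sum_(j < npar) par_coef x j *: rowT j.
Proof.
move=> Hx; set z := x - info_part x - \sum_(j < npar) par_coef x j *: rowT j.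
have Hz : z \in std_code.
  apply: std_code_sub; first exact: std_code_sub Hx (info_part_in_code x).
  by apply: std_code_sum => j _; apply: torsion_rowT_in_code; apply: par_coef_torsion.
have z_par (j : 'I_npar) : z ord0 (rshift ninf j) = 0.
  rewrite /z mxE [X in _ + X]mxE summxE.
  under eq_bigr do rewrite mxE rowT_par.
  by rewrite sum_kron subrr.
have z_info (i : 'I_ninf) : z ord0 (lshift npar i) = 0.
  case/std_codeP: Hz => /(_ i); rewrite (z4dot_on_info _ z_par).
  by under eq_bigr do rewrite rowR_info mulrC eq_sym; rewrite sum_kron.
have /eqP : z = 0 by apply: row_split_eq0.
by rewrite /z subr_eq0 subr_eq addrC => /eqP.
Qed.

(* C is self-orthogonal: pair the decomposition of x with y in C. *)
Lemma std_code_orth : {in std_code &, forall x y, z4dot x y = 0}.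
Proof.
move=> x y Hx Hy; rewrite z4dotC (std_decomp Hx) z4dotDr !z4dot_sumr.
have /std_codeP [HR HT] := Hy.
rewrite !big1 ?addr0 // => [j _|i _]; rewrite z4dotZr z4dotC; last by rewrite HR mulr0.
exact: mul_2torsion (par_coef_torsion j Hx) (HT j).
Qed.

Lemma std_code_self_dual : self_dual std_code.
Proof. exact: self_dual_of_generators generators_in_code std_code_orth. Qed.

Definition sqnorm_test : bool :=
  all (fun i => natsq n (nth [::] R i) %% 8 == 0)%N (iota 0 ninf) &&
  all (fun j => ~~ odd (natsq n (nth [::] T j))) (iota 0 npar).

Hypothesis sq : sqnorm_test.

(* C is Type II: its squared norms mod 8 vanish on generators and on sums of
   orthogonal codewords. *)
Lemma std_code_typeII x : x \in std_code -> (8 %| euclid_wt x)%N.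
Proof.
move=> Hx; rewrite /dvdn euclid_wt_sqnorm.
case/andP: sq => /all_iotaP sqR /all_iotaP sqT.
have [C0 CD CZ] := std_code_is_code.
pose P v := (v \in std_code) && (sqnorm v %% 8 == 0)%N.
have P0 : P 0 by rewrite /P C0 /sqnorm big1 // => k _; rewrite mxE.
have PD u v : P u -> P v -> P (u + v).
  case/andP=> Hu /eqP Su /andP [Hv /eqP Sv]; rewrite /P CD //=.
  by rewrite sqnormD std_code_orth //= addn0 -modnDm Su Sv.
have /andP [] // : P x.
rewrite (std_decomp Hx) /info_part; apply: (PD); apply: (big_ind P P0 PD) => k _.
  rewrite /P CZ ?rowR_in_code //=.
  by rewrite sqnormZ -modnMmr sqnorm_vecZ4 (eqP (sqR k)) muln0.
rewrite /P torsion_rowT_in_code ?par_coef_torsion //=.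
by rewrite torsion_sqnorm ?par_coef_torsion // sqnorm_vecZ4 sqT.
Qed.

(* Modulo 2 every codeword is the combination of the rows of R given by its
   information coordinates: the parity part is killed by reduction. *)
Lemma red2_coord x k : x \in std_code ->
  red2 (x ord0 k) = \sum_(i < ninf) red2 (x ord0 (lshift npar i)) * red2 (rowR i ord0 k).
Proof.
move=> Hx; rewrite {1}(std_decomp Hx) [in LHS]mxE !summxE red2D.
rewrite !(big_morph red2 red2D red20) [X in _ + X]big1 ?addr0 => [|j _].
  by apply: eq_bigr => i _; rewrite mxE red2M.
move/eqP: (par_coef_torsion j Hx); rewrite two_torsion_even mxE red2M red2_odd => /negPf->.
by rewrite mul0r.
Qed.

(* The rows of R mod 2 span the residue code and are independent, because
   they restrict to the identity on the information columns. *)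
Definition residue_rows : ninf.-tuple 'rV['F_2]_n := [tuple map_mx red2 (rowR i) | i < ninf].

Lemma residue_rows_free : free residue_rows.
Proof.
have red2_bool (b : bool) : red2 b%:R = b%:R by case: b; apply: val_inj.
apply/freeP => c Hc i; have /rowP /(_ (lshift npar i)) := Hc.
rewrite summxE (bigD1 i) //= big1 ?addr0 => [|i' /negPf ne]; last first.
  by rewrite nth_mktuple mxE mxE rowR_info ne red2_bool mulr0.
by rewrite nth_mktuple mxE mxE rowR_info eqxx red2_bool mulr1 mxE.
Qed.

Lemma std_code_residue_dim : residue_dim std_code = ninf.
Proof.
rewrite /residue_dim; have -> : <<enum (residue std_code)>>%VS = <<residue_rows>>%VS.
  apply/eqP; rewrite eqEsubv; apply/andP; split; apply/span_subvP => v.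
    rewrite mem_enum => /imsetP [c Hc ->].
    have -> : map_mx red2 c = \sum_(i < ninf) red2 (c ord0 (lshift npar i)) *: residue_rows`_i.
      apply/rowP => k; rewrite mxE red2_coord // summxE.
      by apply: eq_bigr => i _; rewrite nth_mktuple !mxE.
    by apply: rpred_sum => i _; apply/rpredZ/memv_span/mem_nth; rewrite size_tuple.
  case/mapP => i _ ->; apply: memv_span; rewrite mem_enum.
  exact/imsetP/(ex_intro2 _ _ (rowR i) (rowR_in_code i)).
by move/eqnP: residue_rows_free; rewrite size_tuple.
Qed.

Definition info_bits (x : vec) : seq nat :=
  [seq val (x ord0 (lshift npar i)) %% 2 | i : 'I_ninf <- enum 'I_ninf]%N.

Definition res_odd (b : seq nat) (k : nat) : bool :=
  odd (sumn [seq nth 0 b i * entry R i k | i <- iota 0 ninf]%N).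

Lemma info_bits_bits x : size (info_bits x) = ninf /\ all (fun v => v <= 1)%N (info_bits x).
Proof.
rewrite size_map size_enum_ord; split => //.
by apply/allP => _ /mapP [i _ ->]; rewrite -ltnS ltn_pmod.
Qed.

Lemma odd_coord x k : x \in std_code -> odd (val (x ord0 k)) = res_odd (info_bits x) k.
Proof.
move=> Hx; apply: F2_bool_inj; rewrite -red2_odd red2_coord // -F2_natr.
rewrite -(sum_iota ninf (fun i => nth 0 (info_bits x) i * entry R i k)%N) natr_sum.
apply: eq_bigr => i _; rewrite natrM (nth_map i) ?size_enum_ord // nth_ord_enum.
rewrite mxE /red2 val_inZp4 modn_dvdm //; congr (_ * _).
by rewrite F2_natr [RHS]F2_natr odd_mod.
Qed.

Lemma card_odd_supp x : x \in std_code ->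
  #|odd_supp x| = count (res_odd (info_bits x)) (iota 0 n).
Proof.
move=> Hx; rewrite -card_ord_count; apply: eq_card => k.
by rewrite !inE odd_coord.
Qed.

Definition min_weight_test : bool :=
  allbits ninf (fun b => (b == nseq ninf 0%N) || (16 <= count (res_odd b) (iota 0 n))%N).

Definition separation_test : bool :=
  all (fun k => all (fun l => (k == l) ||
    has (fun i => odd (entry R i k + entry R i l)) (iota 0 ninf)) (iota 0 n)) (iota 0 n).

Hypothesis minw : min_weight_test.
Hypothesis sep : separation_test.

Lemma even_codeword_support x : x \in std_code -> odd_supp x = set0 ->
  #|[set k | x ord0 k != 0]| != 2%N.
Proof.
move=> Hx Hev; apply/cards2P => [[k [l [kl supp_kl]]]].
have /hasP [i] : has (fun i => odd (entry R i k + entry R i l)) (iota 0 ninf).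
  move: (all_iotaP sep k) => /all_iotaP /(_ l) /orP [/eqP eq_kl|//].
  by case/negP: kl; apply/eqP/val_inj.
rewrite mem_iota => /andP [_ lt_i] odd_kl.
suff : z4dot (rowR (Ordinal lt_i)) x != 0.
  by case/std_codeP: Hx => /(_ (Ordinal lt_i)) ->; rewrite eqxx.
have x_even k' : x ord0 k' = (k' \in [set k; l])%:R *+ 2.
  rewrite -supp_kl inE {1}(@even_coord (x ord0 k')) //.
  apply/negP => odd_k'; suff : k' \in odd_supp x by rewrite Hev inE.
  by rewrite inE.
rewrite /z4dot; under eq_bigr do rewrite x_even mulrnAr mulr_natr mulrb.
rewrite sumrMnl -big_mkcond big_setU1 ?inE //= big_set1 two_torsion_even.
by rewrite !mxE val_addZ4 !val_inZp4 odd_mod // negbK oddD !odd_mod // -oddD.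
Qed.

(* Minimum weight 16: a codeword with a nonzero residue has at least 16 odd
   coordinates; an even nonzero codeword has support size divisible by 2 (by
   doubly-evenness), different from 2, hence at least 4, i.e. weight >= 16. *)
Lemma std_code_min_wt x : x \in std_code -> x != 0 -> (16 <= euclid_wt x)%N.
Proof.
move=> Hx nz_x; have [size_b bits_b] := info_bits_bits x.
have /orP [/eqP b0|Hb] := allbitsP minw size_b bits_b; last first.
  by rewrite (leq_trans Hb) // -card_odd_supp // odd_supp_le_euclid_wt.
have Hev : odd_supp x = set0.
  apply/setP => k; rewrite !inE odd_coord // b0 /res_odd.
  by rewrite sumnE big_map big1 // => i _; rewrite nth_nseq if_same.
have := std_code_typeII Hx; have := even_codeword_support Hx Hev.
rewrite euclid_wt_even //; set m := #|_|.
have : m != 0%N.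
  apply: contra nz_x; rewrite cards_eq0 => /eqP supp0; apply/eqP/rowP => k.
  have : k \notin [set k | x ord0 k != 0] by rewrite supp0 inE.
  by rewrite inE negbK mxE => /eqP.
by move=> /eqP ? /eqP ? /dvdnP [q ?]; lia.
Qed.

Lemma std_code_extremal (i0 : 'I_ninf) :
  (n %/ 24 = 1)%N -> euclid_wt (rowR i0) = 16%N -> extremal_typeII std_code.
Proof.
move=> n24 wt_i0; split; first by split; [exact: std_code_self_dual | exact: std_code_typeII].
rewrite n24; split; last exact: std_code_min_wt.
exists (rowR i0); first exact: rowR_in_code.
split=> //; apply: contra_eqN wt_i0 => /eqP ->.
by rewrite /euclid_wt big1 // => k _; rewrite mxE.
Qed.

Definition no_pair_test (a b m : nat) : bool :=
  allbits ninf (fun u => allbits ninf (fun v => ~~ [&&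
    count (res_odd u) (iota 0 n) == a,
    count (res_odd v) (iota 0 n) == b &
    count (fun k => res_odd u k && res_odd v k) (iota 0 n) == m])).

Lemma std_code_no_odd_pair a b m : no_pair_test a b m -> ~ has_odd_pair std_code a b m.
Proof.
move=> nopair [x [y [Hx Hy ox oy oxy]]].
have [size_x bits_x] := info_bits_bits x; have [size_y bits_y] := info_bits_bits y.
move: (allbitsP (allbitsP nopair size_x bits_x) size_y bits_y).
have -> : count (fun k => res_odd (info_bits x) k && res_odd (info_bits y) k)
                (iota 0 n) = #|odd_supp x :&: odd_supp y|.
  by rewrite -card_ord_count; apply: eq_card => k; rewrite !inE !odd_coord.
by rewrite -(card_odd_supp Hx) -(card_odd_supp Hy) ox oy oxy !eqxx.
Qed.
End StandardForm.

(* The two codes, by their generator rows R and T (entries 0..3), and a word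
   of the second code whose odd coordinates meet those of its row R_2 in 6. *)
Local Open Scope nat_scope.

Definition code1_R : seq (seq nat) :=
  [:: [:: 1; 0; 0; 0; 0; 0; 0; 1; 1; 1; 1; 1; 1; 1; 1; 2; 0; 1; 0; 0; 0; 1; 1; 1; 0; 0; 1; 0; 0; 0; 1; 0; 0; 0; 1; 1; 0; 1; 1; 1];
  [:: 0; 1; 0; 0; 0; 0; 0; 3; 0; 1; 0; 1; 1; 0; 0; 1; 0; 0; 1; 0; 1; 1; 0; 0; 1; 0; 0; 1; 0; 1; 0; 1; 0; 0; 1; 0; 0; 1; 0; 1];
  [:: 0; 0; 1; 0; 0; 0; 0; 0; 1; 0; 1; 1; 0; 1; 0; 0; 1; 0; 0; 1; 1; 0; 1; 0; 0; 1; 0; 0; 1; 1; 0; 0; 1; 0; 0; 1; 0; 0; 1; 1];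
  [:: 0; 0; 0; 1; 0; 0; 0; 3; 1; 0; 0; 1; 0; 0; 1; 1; 1; 0; 0; 0; 1; 0; 0; 1; 1; 1; 0; 0; 0; 1; 0; 0; 0; 1; 1; 1; 0; 0; 0; 1];
  [:: 0; 0; 0; 0; 1; 0; 0; 0; 0; 1; 1; 1; 0; 0; 0; 0; 0; 1; 1; 1; 1; 0; 0; 0; 0; 0; 1; 1; 1; 1; 0; 0; 0; 0; 0; 0; 1; 1; 1; 1];
  [:: 0; 0; 0; 0; 0; 1; 0; 0; 0; 0; 0; 0; 3; 1; 1; 1; 1; 1; 1; 1; 1; 2; 0; 0; 0; 0; 0; 0; 0; 0; 1; 1; 1; 1; 1; 1; 1; 1; 1; 1];
  [:: 0; 0; 0; 0; 0; 0; 1; 0; 2; 2; 0; 2; 0; 0; 0; 0; 0; 0; 0; 0; 0; 1; 1; 1; 1; 1; 1; 1; 1; 1; 1; 1; 1; 1; 1; 1; 1; 1; 1; 1]].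

Definition code1_T : seq (seq nat) :=
  [:: [:: 1; 1; 0; 1; 0; 0; 0; 1; 0; 0; 0; 0; 0; 0; 0; 0; 0; 0; 0; 0; 0; 0; 0; 0; 0; 0; 0; 0; 0; 0; 0; 0; 0; 0; 0; 0; 0; 0; 0; 0];
  [:: 1; 0; 1; 1; 0; 0; 0; 0; 1; 0; 0; 0; 0; 0; 0; 0; 0; 0; 0; 0; 0; 0; 0; 0; 0; 0; 0; 0; 0; 0; 0; 0; 0; 0; 0; 0; 0; 0; 0; 0];
  [:: 1; 1; 0; 0; 1; 0; 0; 0; 0; 1; 0; 0; 0; 0; 0; 0; 0; 0; 0; 0; 0; 0; 0; 0; 0; 0; 0; 0; 0; 0; 0; 0; 0; 0; 0; 0; 0; 0; 0; 0];
  [:: 1; 0; 1; 0; 1; 0; 0; 0; 0; 0; 1; 0; 0; 0; 0; 0; 0; 0; 0; 0; 0; 0; 0; 0; 0; 0; 0; 0; 0; 0; 0; 0; 0; 0; 0; 0; 0; 0; 0; 0];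
  [:: 1; 1; 1; 1; 1; 0; 0; 0; 0; 0; 0; 1; 0; 0; 0; 0; 0; 0; 0; 0; 0; 0; 0; 0; 0; 0; 0; 0; 0; 0; 0; 0; 0; 0; 0; 0; 0; 0; 0; 0];
  [:: 1; 1; 0; 0; 0; 1; 0; 0; 0; 0; 0; 0; 1; 0; 0; 0; 0; 0; 0; 0; 0; 0; 0; 0; 0; 0; 0; 0; 0; 0; 0; 0; 0; 0; 0; 0; 0; 0; 0; 0];
  [:: 1; 0; 1; 0; 0; 1; 0; 0; 0; 0; 0; 0; 0; 1; 0; 0; 0; 0; 0; 0; 0; 0; 0; 0; 0; 0; 0; 0; 0; 0; 0; 0; 0; 0; 0; 0; 0; 0; 0; 0];
  [:: 1; 0; 0; 1; 0; 1; 0; 0; 0; 0; 0; 0; 0; 0; 1; 0; 0; 0; 0; 0; 0; 0; 0; 0; 0; 0; 0; 0; 0; 0; 0; 0; 0; 0; 0; 0; 0; 0; 0; 0];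
  [:: 0; 1; 0; 1; 0; 1; 0; 0; 0; 0; 0; 0; 0; 0; 0; 1; 0; 0; 0; 0; 0; 0; 0; 0; 0; 0; 0; 0; 0; 0; 0; 0; 0; 0; 0; 0; 0; 0; 0; 0];
  [:: 0; 0; 1; 1; 0; 1; 0; 0; 0; 0; 0; 0; 0; 0; 0; 0; 1; 0; 0; 0; 0; 0; 0; 0; 0; 0; 0; 0; 0; 0; 0; 0; 0; 0; 0; 0; 0; 0; 0; 0];
  [:: 1; 0; 0; 0; 1; 1; 0; 0; 0; 0; 0; 0; 0; 0; 0; 0; 0; 1; 0; 0; 0; 0; 0; 0; 0; 0; 0; 0; 0; 0; 0; 0; 0; 0; 0; 0; 0; 0; 0; 0];
  [:: 0; 1; 0; 0; 1; 1; 0; 0; 0; 0; 0; 0; 0; 0; 0; 0; 0; 0; 1; 0; 0; 0; 0; 0; 0; 0; 0; 0; 0; 0; 0; 0; 0; 0; 0; 0; 0; 0; 0; 0];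
  [:: 0; 0; 1; 0; 1; 1; 0; 0; 0; 0; 0; 0; 0; 0; 0; 0; 0; 0; 0; 1; 0; 0; 0; 0; 0; 0; 0; 0; 0; 0; 0; 0; 0; 0; 0; 0; 0; 0; 0; 0];
  [:: 0; 1; 1; 1; 1; 1; 0; 0; 0; 0; 0; 0; 0; 0; 0; 0; 0; 0; 0; 0; 1; 0; 0; 0; 0; 0; 0; 0; 0; 0; 0; 0; 0; 0; 0; 0; 0; 0; 0; 0];
  [:: 1; 1; 0; 0; 0; 0; 1; 0; 0; 0; 0; 0; 0; 0; 0; 0; 0; 0; 0; 0; 0; 1; 0; 0; 0; 0; 0; 0; 0; 0; 0; 0; 0; 0; 0; 0; 0; 0; 0; 0];
  [:: 1; 0; 1; 0; 0; 0; 1; 0; 0; 0; 0; 0; 0; 0; 0; 0; 0; 0; 0; 0; 0; 0; 1; 0; 0; 0; 0; 0; 0; 0; 0; 0; 0; 0; 0; 0; 0; 0; 0; 0];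
  [:: 1; 0; 0; 1; 0; 0; 1; 0; 0; 0; 0; 0; 0; 0; 0; 0; 0; 0; 0; 0; 0; 0; 0; 1; 0; 0; 0; 0; 0; 0; 0; 0; 0; 0; 0; 0; 0; 0; 0; 0];
  [:: 0; 1; 0; 1; 0; 0; 1; 0; 0; 0; 0; 0; 0; 0; 0; 0; 0; 0; 0; 0; 0; 0; 0; 0; 1; 0; 0; 0; 0; 0; 0; 0; 0; 0; 0; 0; 0; 0; 0; 0];
  [:: 0; 0; 1; 1; 0; 0; 1; 0; 0; 0; 0; 0; 0; 0; 0; 0; 0; 0; 0; 0; 0; 0; 0; 0; 0; 1; 0; 0; 0; 0; 0; 0; 0; 0; 0; 0; 0; 0; 0; 0];
  [:: 1; 0; 0; 0; 1; 0; 1; 0; 0; 0; 0; 0; 0; 0; 0; 0; 0; 0; 0; 0; 0; 0; 0; 0; 0; 0; 1; 0; 0; 0; 0; 0; 0; 0; 0; 0; 0; 0; 0; 0];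
  [:: 0; 1; 0; 0; 1; 0; 1; 0; 0; 0; 0; 0; 0; 0; 0; 0; 0; 0; 0; 0; 0; 0; 0; 0; 0; 0; 0; 1; 0; 0; 0; 0; 0; 0; 0; 0; 0; 0; 0; 0];
  [:: 0; 0; 1; 0; 1; 0; 1; 0; 0; 0; 0; 0; 0; 0; 0; 0; 0; 0; 0; 0; 0; 0; 0; 0; 0; 0; 0; 0; 1; 0; 0; 0; 0; 0; 0; 0; 0; 0; 0; 0];
  [:: 0; 1; 1; 1; 1; 0; 1; 0; 0; 0; 0; 0; 0; 0; 0; 0; 0; 0; 0; 0; 0; 0; 0; 0; 0; 0; 0; 0; 0; 1; 0; 0; 0; 0; 0; 0; 0; 0; 0; 0];
  [:: 1; 0; 0; 0; 0; 1; 1; 0; 0; 0; 0; 0; 0; 0; 0; 0; 0; 0; 0; 0; 0; 0; 0; 0; 0; 0; 0; 0; 0; 0; 1; 0; 0; 0; 0; 0; 0; 0; 0; 0];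
  [:: 0; 1; 0; 0; 0; 1; 1; 0; 0; 0; 0; 0; 0; 0; 0; 0; 0; 0; 0; 0; 0; 0; 0; 0; 0; 0; 0; 0; 0; 0; 0; 1; 0; 0; 0; 0; 0; 0; 0; 0];
  [:: 0; 0; 1; 0; 0; 1; 1; 0; 0; 0; 0; 0; 0; 0; 0; 0; 0; 0; 0; 0; 0; 0; 0; 0; 0; 0; 0; 0; 0; 0; 0; 0; 1; 0; 0; 0; 0; 0; 0; 0];
  [:: 0; 0; 0; 1; 0; 1; 1; 0; 0; 0; 0; 0; 0; 0; 0; 0; 0; 0; 0; 0; 0; 0; 0; 0; 0; 0; 0; 0; 0; 0; 0; 0; 0; 1; 0; 0; 0; 0; 0; 0];
  [:: 1; 1; 0; 1; 0; 1; 1; 0; 0; 0; 0; 0; 0; 0; 0; 0; 0; 0; 0; 0; 0; 0; 0; 0; 0; 0; 0; 0; 0; 0; 0; 0; 0; 0; 1; 0; 0; 0; 0; 0];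
  [:: 1; 0; 1; 1; 0; 1; 1; 0; 0; 0; 0; 0; 0; 0; 0; 0; 0; 0; 0; 0; 0; 0; 0; 0; 0; 0; 0; 0; 0; 0; 0; 0; 0; 0; 0; 1; 0; 0; 0; 0];
  [:: 0; 0; 0; 0; 1; 1; 1; 0; 0; 0; 0; 0; 0; 0; 0; 0; 0; 0; 0; 0; 0; 0; 0; 0; 0; 0; 0; 0; 0; 0; 0; 0; 0; 0; 0; 0; 1; 0; 0; 0];
  [:: 1; 1; 0; 0; 1; 1; 1; 0; 0; 0; 0; 0; 0; 0; 0; 0; 0; 0; 0; 0; 0; 0; 0; 0; 0; 0; 0; 0; 0; 0; 0; 0; 0; 0; 0; 0; 0; 1; 0; 0];
  [:: 1; 0; 1; 0; 1; 1; 1; 0; 0; 0; 0; 0; 0; 0; 0; 0; 0; 0; 0; 0; 0; 0; 0; 0; 0; 0; 0; 0; 0; 0; 0; 0; 0; 0; 0; 0; 0; 0; 1; 0];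
  [:: 1; 1; 1; 1; 1; 1; 1; 0; 0; 0; 0; 0; 0; 0; 0; 0; 0; 0; 0; 0; 0; 0; 0; 0; 0; 0; 0; 0; 0; 0; 0; 0; 0; 0; 0; 0; 0; 0; 0; 1]].

Definition code2_R : seq (seq nat) :=
  [:: [:: 1; 0; 0; 0; 0; 0; 0; 1; 1; 1; 2; 0; 1; 1; 1; 1; 0; 0; 0; 1; 1; 0; 1; 1; 1; 0; 1; 1; 0; 1; 1; 0; 0; 1; 0; 0; 1; 1; 0; 0];
  [:: 0; 1; 0; 0; 0; 0; 0; 3; 2; 0; 1; 1; 1; 1; 0; 0; 1; 1; 0; 1; 1; 0; 1; 0; 0; 1; 0; 0; 1; 1; 0; 1; 0; 1; 0; 0; 1; 1; 1; 1];
  [:: 0; 0; 1; 0; 0; 0; 0; 1; 1; 0; 0; 1; 1; 0; 1; 0; 0; 1; 0; 0; 1; 1; 0; 1; 0; 0; 0; 1; 1; 0; 0; 0; 1; 0; 0; 1; 1; 0; 0; 1];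
  [:: 0; 0; 0; 1; 0; 0; 0; 3; 2; 1; 1; 0; 1; 0; 0; 1; 1; 1; 1; 1; 0; 1; 0; 0; 1; 1; 0; 1; 1; 1; 0; 0; 0; 1; 0; 1; 1; 0; 1; 0];
  [:: 0; 0; 0; 0; 1; 0; 0; 1; 3; 1; 1; 1; 2; 0; 0; 0; 0; 3; 1; 1; 1; 0; 0; 0; 0; 0; 1; 1; 1; 1; 0; 0; 0; 0; 1; 1; 1; 1; 1; 1];
  [:: 0; 0; 0; 0; 0; 1; 0; 0; 0; 2; 0; 0; 1; 1; 1; 1; 1; 1; 1; 1; 1; 0; 0; 0; 0; 0; 0; 0; 0; 0; 1; 1; 1; 1; 1; 1; 1; 1; 1; 1];
  [:: 0; 0; 0; 0; 0; 0; 1; 2; 0; 0; 2; 0; 0; 0; 0; 0; 0; 2; 0; 0; 0; 1; 1; 1; 1; 1; 1; 1; 1; 1; 1; 1; 1; 1; 1; 1; 1; 1; 1; 1]].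

Definition code2_T : seq (seq nat) :=
  [:: [:: 1; 1; 1; 1; 1; 0; 0; 1; 0; 0; 0; 0; 0; 0; 0; 0; 0; 0; 0; 0; 0; 0; 0; 0; 0; 0; 0; 0; 0; 0; 0; 0; 0; 0; 0; 0; 0; 0; 0; 0];
  [:: 1; 0; 1; 0; 1; 0; 0; 0; 1; 0; 0; 0; 0; 0; 0; 0; 0; 0; 0; 0; 0; 0; 0; 0; 0; 0; 0; 0; 0; 0; 0; 0; 0; 0; 0; 0; 0; 0; 0; 0];
  [:: 1; 0; 0; 1; 1; 0; 0; 0; 0; 1; 0; 0; 0; 0; 0; 0; 0; 0; 0; 0; 0; 0; 0; 0; 0; 0; 0; 0; 0; 0; 0; 0; 0; 0; 0; 0; 0; 0; 0; 0];
  [:: 0; 1; 0; 1; 1; 0; 0; 0; 0; 0; 1; 0; 0; 0; 0; 0; 0; 0; 0; 0; 0; 0; 0; 0; 0; 0; 0; 0; 0; 0; 0; 0; 0; 0; 0; 0; 0; 0; 0; 0];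
  [:: 0; 1; 1; 0; 1; 0; 0; 0; 0; 0; 0; 1; 0; 0; 0; 0; 0; 0; 0; 0; 0; 0; 0; 0; 0; 0; 0; 0; 0; 0; 0; 0; 0; 0; 0; 0; 0; 0; 0; 0];
  [:: 1; 1; 1; 1; 0; 1; 0; 0; 0; 0; 0; 0; 1; 0; 0; 0; 0; 0; 0; 0; 0; 0; 0; 0; 0; 0; 0; 0; 0; 0; 0; 0; 0; 0; 0; 0; 0; 0; 0; 0];
  [:: 1; 1; 0; 0; 0; 1; 0; 0; 0; 0; 0; 0; 0; 1; 0; 0; 0; 0; 0; 0; 0; 0; 0; 0; 0; 0; 0; 0; 0; 0; 0; 0; 0; 0; 0; 0; 0; 0; 0; 0];
  [:: 1; 0; 1; 0; 0; 1; 0; 0; 0; 0; 0; 0; 0; 0; 1; 0; 0; 0; 0; 0; 0; 0; 0; 0; 0; 0; 0; 0; 0; 0; 0; 0; 0; 0; 0; 0; 0; 0; 0; 0];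
  [:: 1; 0; 0; 1; 0; 1; 0; 0; 0; 0; 0; 0; 0; 0; 0; 1; 0; 0; 0; 0; 0; 0; 0; 0; 0; 0; 0; 0; 0; 0; 0; 0; 0; 0; 0; 0; 0; 0; 0; 0];
  [:: 0; 1; 0; 1; 0; 1; 0; 0; 0; 0; 0; 0; 0; 0; 0; 0; 1; 0; 0; 0; 0; 0; 0; 0; 0; 0; 0; 0; 0; 0; 0; 0; 0; 0; 0; 0; 0; 0; 0; 0];
  [:: 0; 1; 1; 1; 1; 1; 0; 0; 0; 0; 0; 0; 0; 0; 0; 0; 0; 1; 0; 0; 0; 0; 0; 0; 0; 0; 0; 0; 0; 0; 0; 0; 0; 0; 0; 0; 0; 0; 0; 0];
  [:: 0; 0; 0; 1; 1; 1; 0; 0; 0; 0; 0; 0; 0; 0; 0; 0; 0; 0; 1; 0; 0; 0; 0; 0; 0; 0; 0; 0; 0; 0; 0; 0; 0; 0; 0; 0; 0; 0; 0; 0];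
  [:: 1; 1; 0; 1; 1; 1; 0; 0; 0; 0; 0; 0; 0; 0; 0; 0; 0; 0; 0; 1; 0; 0; 0; 0; 0; 0; 0; 0; 0; 0; 0; 0; 0; 0; 0; 0; 0; 0; 0; 0];
  [:: 1; 1; 1; 0; 1; 1; 0; 0; 0; 0; 0; 0; 0; 0; 0; 0; 0; 0; 0; 0; 1; 0; 0; 0; 0; 0; 0; 0; 0; 0; 0; 0; 0; 0; 0; 0; 0; 0; 0; 0];
  [:: 0; 0; 1; 1; 0; 0; 1; 0; 0; 0; 0; 0; 0; 0; 0; 0; 0; 0; 0; 0; 0; 1; 0; 0; 0; 0; 0; 0; 0; 0; 0; 0; 0; 0; 0; 0; 0; 0; 0; 0];
  [:: 1; 1; 0; 0; 0; 0; 1; 0; 0; 0; 0; 0; 0; 0; 0; 0; 0; 0; 0; 0; 0; 0; 1; 0; 0; 0; 0; 0; 0; 0; 0; 0; 0; 0; 0; 0; 0; 0; 0; 0];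
  [:: 1; 0; 1; 0; 0; 0; 1; 0; 0; 0; 0; 0; 0; 0; 0; 0; 0; 0; 0; 0; 0; 0; 0; 1; 0; 0; 0; 0; 0; 0; 0; 0; 0; 0; 0; 0; 0; 0; 0; 0];
  [:: 1; 0; 0; 1; 0; 0; 1; 0; 0; 0; 0; 0; 0; 0; 0; 0; 0; 0; 0; 0; 0; 0; 0; 0; 1; 0; 0; 0; 0; 0; 0; 0; 0; 0; 0; 0; 0; 0; 0; 0];
  [:: 0; 1; 0; 1; 0; 0; 1; 0; 0; 0; 0; 0; 0; 0; 0; 0; 0; 0; 0; 0; 0; 0; 0; 0; 0; 1; 0; 0; 0; 0; 0; 0; 0; 0; 0; 0; 0; 0; 0; 0];
  [:: 1; 0; 0; 0; 1; 0; 1; 0; 0; 0; 0; 0; 0; 0; 0; 0; 0; 0; 0; 0; 0; 0; 0; 0; 0; 0; 1; 0; 0; 0; 0; 0; 0; 0; 0; 0; 0; 0; 0; 0];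
  [:: 1; 0; 1; 1; 1; 0; 1; 0; 0; 0; 0; 0; 0; 0; 0; 0; 0; 0; 0; 0; 0; 0; 0; 0; 0; 0; 0; 1; 0; 0; 0; 0; 0; 0; 0; 0; 0; 0; 0; 0];
  [:: 0; 1; 1; 1; 1; 0; 1; 0; 0; 0; 0; 0; 0; 0; 0; 0; 0; 0; 0; 0; 0; 0; 0; 0; 0; 0; 0; 0; 1; 0; 0; 0; 0; 0; 0; 0; 0; 0; 0; 0];
  [:: 1; 1; 0; 1; 1; 0; 1; 0; 0; 0; 0; 0; 0; 0; 0; 0; 0; 0; 0; 0; 0; 0; 0; 0; 0; 0; 0; 0; 0; 1; 0; 0; 0; 0; 0; 0; 0; 0; 0; 0];
  [:: 1; 0; 0; 0; 0; 1; 1; 0; 0; 0; 0; 0; 0; 0; 0; 0; 0; 0; 0; 0; 0; 0; 0; 0; 0; 0; 0; 0; 0; 0; 1; 0; 0; 0; 0; 0; 0; 0; 0; 0];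
  [:: 0; 1; 0; 0; 0; 1; 1; 0; 0; 0; 0; 0; 0; 0; 0; 0; 0; 0; 0; 0; 0; 0; 0; 0; 0; 0; 0; 0; 0; 0; 0; 1; 0; 0; 0; 0; 0; 0; 0; 0];
  [:: 0; 0; 1; 0; 0; 1; 1; 0; 0; 0; 0; 0; 0; 0; 0; 0; 0; 0; 0; 0; 0; 0; 0; 0; 0; 0; 0; 0; 0; 0; 0; 0; 1; 0; 0; 0; 0; 0; 0; 0];
  [:: 1; 1; 0; 1; 0; 1; 1; 0; 0; 0; 0; 0; 0; 0; 0; 0; 0; 0; 0; 0; 0; 0; 0; 0; 0; 0; 0; 0; 0; 0; 0; 0; 0; 1; 0; 0; 0; 0; 0; 0];
  [:: 0; 0; 0; 0; 1; 1; 1; 0; 0; 0; 0; 0; 0; 0; 0; 0; 0; 0; 0; 0; 0; 0; 0; 0; 0; 0; 0; 0; 0; 0; 0; 0; 0; 0; 1; 0; 0; 0; 0; 0];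
  [:: 0; 0; 1; 1; 1; 1; 1; 0; 0; 0; 0; 0; 0; 0; 0; 0; 0; 0; 0; 0; 0; 0; 0; 0; 0; 0; 0; 0; 0; 0; 0; 0; 0; 0; 0; 1; 0; 0; 0; 0];
  [:: 1; 1; 1; 1; 1; 1; 1; 0; 0; 0; 0; 0; 0; 0; 0; 0; 0; 0; 0; 0; 0; 0; 0; 0; 0; 0; 0; 0; 0; 0; 0; 0; 0; 0; 0; 0; 1; 0; 0; 0];
  [:: 1; 1; 0; 0; 1; 1; 1; 0; 0; 0; 0; 0; 0; 0; 0; 0; 0; 0; 0; 0; 0; 0; 0; 0; 0; 0; 0; 0; 0; 0; 0; 0; 0; 0; 0; 0; 0; 1; 0; 0];
  [:: 0; 1; 0; 1; 1; 1; 1; 0; 0; 0; 0; 0; 0; 0; 0; 0; 0; 0; 0; 0; 0; 0; 0; 0; 0; 0; 0; 0; 0; 0; 0; 0; 0; 0; 0; 0; 0; 0; 1; 0];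
  [:: 0; 1; 1; 0; 1; 1; 1; 0; 0; 0; 0; 0; 0; 0; 0; 0; 0; 0; 0; 0; 0; 0; 0; 0; 0; 0; 0; 0; 0; 0; 0; 0; 0; 0; 0; 0; 0; 0; 0; 1]].

Definition code2_word : seq nat := [:: 0; 0; 0; 1; 0; 1; 1; 1; 2; 3; 3; 0; 2; 1; 1; 2; 2; 0; 2; 2; 1; 2; 1; 1; 2; 2; 1; 2; 2; 2; 2; 2; 2; 3; 2; 3; 3; 2; 3; 2].

Lemma code1_std : std_form 7 33 code1_R code1_T. Proof. by vm_compute. Qed.
Lemma code1_gens : generators_test 7 33 code1_R code1_T. Proof. by vm_compute. Qed.
Lemma code1_sq : sqnorm_test 7 33 code1_R code1_T. Proof. by vm_compute. Qed.
Lemma code1_minw : min_weight_test 7 33 code1_R. Proof. by vm_compute. Qed.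
Lemma code1_sep : separation_test 7 33 code1_R. Proof. by vm_compute. Qed.
Lemma code1_no_pair : no_pair_test 7 33 code1_R 16 16 6. Proof. by vm_compute. Qed.
Lemma code1_wt : euclid_wt (rowR 33 code1_R (@Ordinal 7 4 isT)) = 16%N.
Proof. by rewrite euclid_wt_vecZ4; vm_compute. Qed.

Lemma code2_std : std_form 7 33 code2_R code2_T. Proof. by vm_compute. Qed.
Lemma code2_gens : generators_test 7 33 code2_R code2_T. Proof. by vm_compute. Qed.
Lemma code2_sq : sqnorm_test 7 33 code2_R code2_T. Proof. by vm_compute. Qed.
Lemma code2_minw : min_weight_test 7 33 code2_R. Proof. by vm_compute. Qed.
Lemma code2_sep : separation_test 7 33 code2_R. Proof. by vm_compute. Qed.
Lemma code2_wt : euclid_wt (rowR 33 code2_R (@Ordinal 7 2 isT)) = 16%N.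
Proof. by rewrite euclid_wt_vecZ4; vm_compute. Qed.

Lemma code2_odd_pair : has_odd_pair (std_code 7 33 code2_R code2_T) 16 16 6.
Proof.
apply: (@has_odd_pair_vecZ4 _ _ (nth [::] code2_R 2) code2_word).
- exact: (rowR_in_code code2_gens (@Ordinal 7 2 isT)).
- by apply: code_testP; vm_compute.
all: by vm_compute.
Qed.

Theorem mainTheorem11 :
  exists C1 C2 : {set 'rV['Z_4]_40},
    [/\ extremal_typeII C1, extremal_typeII C2,
        residue_dim C1 = 7%N, residue_dim C2 = 7%N
      & ~ z4equiv C1 C2].
Proof.
exists (std_code 7 33 code1_R code1_T), (std_code 7 33 code2_R code2_T); split.
- exact: std_code_extremal code1_std code1_gens code1_sq code1_minw code1_sep _ erefl code1_wt.
- exact: std_code_extremal code2_std code2_gens code2_sq code2_minw code2_sep _ erefl code2_wt.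
- exact: std_code_residue_dim code1_std code1_gens.
- exact: std_code_residue_dim code2_std code2_gens.
move=> equiv12; apply: (std_code_no_odd_pair code1_std code1_gens code1_no_pair).
exact: has_odd_pair_equiv equiv12 code2_odd_pair.
Qed.
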